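(* Let $(X,d)$ be a complete Busemann convex geodesic metric space which is uniformly convex with a modulus of uniform convexity that is monotone or lower semicontinuous from the right. Let $(A,B)$ be a closed convex pair of subsets of $X$ with $B$ bounded, and let $T:A\cup B\to A\cup B$ be a noncyclic relatively nonexpansive mapping. Then there exists $(x,y)\in A\times B$ such that $x=Tx$, $y=Ty$ and $d(x,y)=\operatorname{dist}(A,B)$.
   Context: $\operatorname{dist}(A,B)=\inf\{d(x,y):x\in A,y\in B\}$. A geodesic space is one in which any two points are joined by a geodesic segment; a subset is convex if it contains every geodesic segment joining two of its points. $X$ is Busemann convex if for any geodesics $c_1:[0,l_1]\to X$, $c_2:[0,l_2]\to X$, $d(c_1(tl_1),c_2(tl_2))\le (1-t)d(c_1(0),c_2(0))+t\,d(c_1(l_1),c_2(l_2))$ for all $t\in[0,1]$. $X$ is uniformly convex if for every $r>0$ and $\varepsilon\in(0,2]$ there is $\delta\in(0,1]$ such that for all $a,x,y$ with $d(x,a)\le r$, $d(y,a)\le r$, $d(x,y)\ge\varepsilon r$, every midpoint $m$ of $x,y$ satisfies $d(m,a)\le(1-\delta)r$; a function $\delta(r,\varepsilon)$ providing such $\delta$ is a modulus of uniform convexity; it is monotone if it is decreasing in $r$ for each fixed $\varepsilon$, and lower semicontinuous from the right if it is lower semicontinuous from the right in $r$ for each fixed $\varepsilon$. $T$ is relatively nonexpansive if $d(Tx,Ty)\le d(x,y)$ for all $x\in A$, $y\in B$, and noncyclic if $T(A)\subseteq A$, $T(B)\subseteq B$. *)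

From Stdlib Require Import Reals.
Open Scope R_scope.

Definition is_metric {X : Type} (d : X -> X -> R) : Prop :=
  (forall x y, d x y = 0 <-> x = y) /\
  (forall x y, d x y = d y x) /\
  (forall x y z, d x z <= d x y + d y z).

Definition cauchy_seq {X : Type} (d : X -> X -> R) (u : nat -> X) : Prop :=
  forall e, 0 < e -> exists N, forall m n, (N <= m)%nat -> (N <= n)%nat -> d (u m) (u n) < e.

Definition converges_to {X : Type} (d : X -> X -> R) (u : nat -> X) (x : X) : Prop :=
  forall e, 0 < e -> exists N, forall n, (N <= n)%nat -> d (u n) x < e.

Definition complete_metric {X : Type} (d : X -> X -> R) : Prop :=
  forall u, cauchy_seq d u -> exists x, converges_to d u x.

(* closed subset (sequentially closed; equivalent to closed in a metric space) *)
Definition seq_closed_set {X : Type} (d : X -> X -> R) (A : X -> Prop) : Prop :=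
  forall u x, (forall n, A (u n)) -> converges_to d u x -> A x.

Definition metric_bounded {X : Type} (d : X -> X -> R) (A : X -> Prop) : Prop :=
  exists x0 r, forall x, A x -> d x x0 <= r.

(* c : [0,l] -> X is a is_geodesic (isometric embedding of [0,l]); c is
   given as a function on R whose values outside [0,l] are irrelevant *)
Definition is_geodesic {X : Type} (d : X -> X -> R) (c : R -> X) (l : R) : Prop :=
  0 <= l /\ forall s t, 0 <= s <= l -> 0 <= t <= l -> d (c s) (c t) = Rabs (s - t).

Definition geodesic_space {X : Type} (d : X -> X -> R) : Prop :=
  forall x y, exists c, is_geodesic d c (d x y) /\ c 0 = x /\ c (d x y) = y.

Definition geod_convex {X : Type} (d : X -> X -> R) (A : X -> Prop) : Prop :=
  forall c l, is_geodesic d c l -> A (c 0) -> A (c l) ->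
    forall t, 0 <= t <= l -> A (c t).

Definition busemann_convex {X : Type} (d : X -> X -> R) : Prop :=
  forall c1 l1 c2 l2, is_geodesic d c1 l1 -> is_geodesic d c2 l2 ->
    forall t, 0 <= t <= 1 ->
      d (c1 (t * l1)) (c2 (t * l2)) <= (1 - t) * d (c1 0) (c2 0) + t * d (c1 l1) (c2 l2).

Definition is_midpoint {X : Type} (d : X -> X -> R) (x y m : X) : Prop :=
  d x m = d x y / 2 /\ d m y = d x y / 2.

Definition modulus_uc {X : Type} (d : X -> X -> R) (delta : R -> R -> R) : Prop :=
  forall r eps, 0 < r -> 0 < eps <= 2 ->
    0 < delta r eps <= 1 /\
    forall a x y m, d x a <= r -> d y a <= r -> d x y >= eps * r ->
      is_midpoint d x y m -> d m a <= (1 - delta r eps) * r.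

Definition uniformly_convex {X : Type} (d : X -> X -> R) : Prop :=
  exists delta, modulus_uc d delta.

Definition modulus_monotone (delta : R -> R -> R) : Prop :=
  forall eps, 0 < eps <= 2 ->
    forall r1 r2, 0 < r1 -> r1 <= r2 -> delta r2 eps <= delta r1 eps.

Definition modulus_lsc_right (delta : R -> R -> R) : Prop :=
  forall eps, 0 < eps <= 2 -> forall r, 0 < r ->
    forall e, 0 < e -> exists h, 0 < h /\
      forall s, r <= s < r + h -> delta r eps - e < delta s eps.

Definition is_inf_of (E : R -> Prop) (m : R) : Prop :=
  (forall r, E r -> m <= r) /\ (forall b, (forall r, E r -> b <= r) -> b <= m).

Definition dist_set {X : Type} (d : X -> X -> R) (A B : X -> Prop) : R -> Prop :=
  fun r => exists a b, A a /\ B b /\ r = d a b.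

Definition set_dist_is {X : Type} (d : X -> X -> R) (A B : X -> Prop) (r : R) : Prop :=
  is_inf_of (dist_set d A B) r.

Definition relatively_nonexpansive {X : Type} (d : X -> X -> R) (A B : X -> Prop)
  (T : X -> X) : Prop :=
  forall x y, A x -> B y -> d (T x) (T y) <= d x y.

Definition noncyclic {X : Type} (A B : X -> Prop) (T : X -> X) : Prop :=
  (forall x, A x -> A (T x)) /\ (forall y, B y -> B (T y)).

(* Uniform convexity makes every nested sequence of nonempty closed convex sets, the
   first one bounded, have a common point; hence any closed convex family of sublevel
   sets attains its infimum. This yields a point [b1] of [B] realizing dist(A,B) and
   asymptotic centers of bounded sequences, which are unique. Relative nonexpansiveness
   does not increase the asymptotic radius of the orbit [T^n b1] about [T w] compared to
   [w], so the asymptotic center [w] of the orbit in the proximal part of [A] is fixed by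
   [T]; the nearest point of [B] to [w] is fixed for the same reason. *)

From Stdlib Require Import Reals Lra Lia Psatz Classical ClassicalEpsilon.
Open Scope R_scope.

Lemma inv_INR_succ_pos k : 0 < / (INR k + 1).
Proof. apply Rinv_0_lt_compat. pose proof (pos_INR k). lra. Qed.

Lemma inv_INR_succ_le m n : (m <= n)%nat -> / (INR n + 1) <= / (INR m + 1).
Proof.
  intros Hmn. apply le_INR in Hmn. apply Rinv_le_contravar; [|lra].
  pose proof (pos_INR m). lra.
Qed.

Lemma inv_INR_succ_lt t : 0 < t -> exists N, / (INR N + 1) < t.
Proof.
  intros Ht. destruct (archimed_cor1 t Ht) as [N [HN HN0]]. exists N.
  eapply Rle_lt_trans; [|exact HN]. apply Rinv_le_contravar; [apply lt_0_INR; lia | lra].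
Qed.

Lemma is_inf_of_exists (E : R -> Prop) :
  (exists s, E s) -> (exists m, forall s, E s -> m <= s) -> exists m, is_inf_of E m.
Proof.
  intros [s0 Hs0] [m Hm].
  destruct (completeness (fun s => E (- s))) as [l [Hl1 Hl2]].
  - exists (- m). intros s Hs. specialize (Hm _ Hs). lra.
  - exists (- s0). rewrite Ropp_involutive. exact Hs0.
  - exists (- l). split.
    + intros s Hs. assert (- s <= l) by (apply Hl1; rewrite Ropp_involutive; exact Hs). lra.
    + intros b Hb. assert (l <= - b) by (apply Hl2; intros s Hs; specialize (Hb _ Hs); lra). lra.
Qed.

Lemma is_inf_of_approx (E : R -> Prop) m e :
  is_inf_of E m -> 0 < e -> exists s, E s /\ s < m + e.
Proof.
  intros [_ Hglb] He. apply NNPP. intros Hno.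
  enough (m + e <= m) by lra.
  apply Hglb. intros s Hs. apply Rnot_lt_le. intros Hlt. apply Hno. exists s. auto.
Qed.

(* Uniform convexity at a radius slightly larger than [r] still pushes midpoints of
   [eps]-separated points strictly inside the ball of radius [r]. This is the only
   consequence of monotonicity or semicontinuity of the modulus that the argument uses. *)
Definition uniformly_convex_slack {X : Type} (d : X -> X -> R) : Prop :=
  forall r eps, 0 < r -> 0 < eps -> eps <= 2 * r ->
  exists r' s, r < r' /\ s < r /\
    forall a x y m, d x a <= r' -> d y a <= r' -> eps <= d x y ->
      is_midpoint d x y m -> d m a <= s.

Lemma modulus_locally_positive {X : Type} (d : X -> X -> R) delta :
  modulus_uc d delta -> modulus_monotone delta \/ modulus_lsc_right delta ->
  forall r eps, 0 < r -> 0 < eps <= 2 ->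
  exists h c, 0 < h /\ 0 < c /\ forall r', r <= r' <= r + h -> c <= delta r' eps.
Proof.
  intros Hmod [Hmon | Hlsc] r eps Hr Heps.
  - exists 1, (delta (r + 1) eps). split; [lra|]. split.
    + apply (Hmod (r + 1) eps); lra.
    + intros r' Hr'. apply (Hmon eps Heps r' (r + 1)); lra.
  - destruct (Hmod r eps Hr Heps) as [[Hpos _] _].
    destruct (Hlsc eps Heps r Hr (delta r eps / 2)) as [h [Hh Hnear]]; [lra|].
    exists (h / 2), (delta r eps / 2). split; [lra|]. split; [lra|].
    intros r' Hr'. specialize (Hnear r'). lra.
Qed.

Lemma modulus_uc_slack {X : Type} (d : X -> X -> R) delta :
  modulus_uc d delta -> modulus_monotone delta \/ modulus_lsc_right delta ->
  uniformly_convex_slack d.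
Proof.
  intros Hmod Hml r dxy Hr Hdxy Hdxy2.
  set (eps := dxy / (r + 1)).
  assert (Heps : 0 < eps <= 2).
  { assert (E : eps * (r + 1) = dxy) by (unfold eps; field; lra).
    assert (0 < eps) by (unfold eps; apply Rdiv_lt_0_compat; lra). split; nra. }
  destruct (modulus_locally_positive d delta Hmod Hml r eps Hr Heps) as [h [c [Hh [Hc Hdelta]]]].
  (* [t <= c r / 2] keeps [(1 - c) (r + t)] below [r] *)
  set (t := Rmin h (Rmin 1 (c * r / 2))).
  assert (Ht : 0 < t /\ t <= h /\ t <= 1 /\ t <= c * r / 2).
  { assert (0 < c * r) by (apply Rmult_lt_0_compat; lra).
    unfold t. repeat split.
    - repeat apply Rmin_glb_lt; lra.
    - apply Rmin_l.
    - eapply Rle_trans; [apply Rmin_r | apply Rmin_l].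
    - eapply Rle_trans; [apply Rmin_r | apply Rmin_r]. }
  exists (r + t), ((1 - c) * (r + t)). split; [lra|]. split.
  { assert (c <= delta r eps) by (apply Hdelta; lra).
    destruct (Hmod r eps Hr Heps) as [[_ H1] _]. nra. }
  intros a x y m Hx Hy Hxy Hmid.
  destruct (Hmod (r + t) eps ltac:(lra) Heps) as [_ Huc].
  assert (c <= delta (r + t) eps) by (apply Hdelta; lra).
  assert (Hsep : d x y >= eps * (r + t)).
  { assert (eps * (r + 1) = dxy) by (unfold eps; field; lra). nra. }
  specialize (Huc a x y m Hx Hy Hsep Hmid). nra.
Qed.

Definition limsup_dist_le {X : Type} (d : X -> X -> R) (u : nat -> X) (w : X) (s : R) : Prop :=
  forall e, 0 < e -> exists N, forall n, (N <= n)%nat -> d (u n) w <= s + e.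

Definition within_dist {X : Type} (d : X -> X -> R) (K : X -> Prop) (x : X) (s : R) : Prop :=
  exists y, K y /\ d x y <= s.

Section BusemannUniformlyConvex.

Context {X : Type} {d : X -> X -> R}.
Hypothesis Hmetric : is_metric d.
Hypothesis Hcomplete : complete_metric d.
Hypothesis Hgeod : geodesic_space d.
Hypothesis Hbus : busemann_convex d.
Hypothesis Hslack : uniformly_convex_slack d.

Lemma metric_refl x : d x x = 0.
Proof. apply (proj1 Hmetric). reflexivity. Qed.

Lemma metric_sym x y : d x y = d y x.
Proof. apply (proj1 (proj2 Hmetric)). Qed.

Lemma metric_triangle x y z : d x z <= d x y + d y z.
Proof. apply (proj2 (proj2 Hmetric)). Qed.

Lemma metric_nonneg x y : 0 <= d x y.
Proof.
  pose proof (metric_triangle x y x). rewrite metric_refl, (metric_sym y x) in *. lra.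
Qed.

Lemma metric_eq0 x y : d x y = 0 -> x = y.
Proof. apply (proj1 Hmetric). Qed.

Lemma seq_closed_and (P Q : X -> Prop) :
  seq_closed_set d P -> seq_closed_set d Q -> seq_closed_set d (fun x => P x /\ Q x).
Proof.
  intros HP HQ u x Hu' Hux. split.
  - apply (HP u x); [intro n; apply Hu' | exact Hux].
  - apply (HQ u x); [intro n; apply Hu' | exact Hux].
Qed.

Lemma geod_convex_and (P Q : X -> Prop) :
  geod_convex d P -> geod_convex d Q -> geod_convex d (fun x => P x /\ Q x).
Proof.
  intros HP HQ c l Hc' [HP0 HQ0] [HPl HQl] t Ht.
  split; [apply (HP c l) | apply (HQ c l)]; auto.
Qed.

(* Busemann convexity applied to [c] and [g] at the same time fraction [t / l]. *)
Lemma geodesics_stay_close c l g l' s t :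
  is_geodesic d c l -> is_geodesic d g l' -> 0 <= t <= l ->
  d (g 0) (c 0) <= s -> d (g l') (c l) <= s ->
  exists t', 0 <= t' <= l' /\ d (g t') (c t) <= s.
Proof.
  intros Hcg Hgg Ht H0 Hl.
  assert (Hl' : 0 <= l') by apply Hgg.
  destruct (Req_dec l 0) as [El | El].
  - subst l. exists 0. split; [lra|]. replace t with 0 by lra. exact H0.
  - assert (Hl0 : 0 < l) by (destruct Hcg; lra).
    assert (Hfrac : 0 <= t / l <= 1).
    { split; [apply Rmult_le_pos; [lra | left; apply Rinv_0_lt_compat; lra]|].
      apply Rmult_le_reg_r with l; [lra|]. field_simplify; lra. }
    pose proof (Hbus g l' c l Hgg Hcg (t / l) Hfrac) as Hbus.
    replace (t / l * l) with t in Hbus by (field; lra).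
    exists (t / l * l'). split; [split; nra | nra].
Qed.

Lemma const_geodesic p : is_geodesic d (fun _ => p) 0.
Proof.
  split; [lra|]. intros s t Hs Ht. rewrite metric_refl.
  replace s with 0 by lra. replace t with 0 by lra. rewrite Rminus_0_r, Rabs_R0. reflexivity.
Qed.

Lemma geodesic_in_ball c l p s t :
  is_geodesic d c l -> 0 <= t <= l -> d p (c 0) <= s -> d p (c l) <= s -> d p (c t) <= s.
Proof.
  intros Hcg Ht H0 Hl.
  destruct (geodesics_stay_close c l (fun _ => p) 0 s t Hcg (const_geodesic p) Ht H0 Hl)
    as [_ [_ H]].
  exact H.
Qed.

Lemma convex_midpoint (K : X -> Prop) x y :
  geod_convex d K -> K x -> K y -> exists m, K m /\ is_midpoint d x y m.
Proof.
  intros Hv Hx Hy. destruct (Hgeod x y) as [c [[Hl Hc'] [H0 H1]]].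
  set (l := d x y) in *.
  exists (c (l / 2)). split.
  - apply (Hv c l); [split; auto | rewrite H0; auto | rewrite H1; auto | lra].
  - unfold is_midpoint. fold l. rewrite <- H0, <- H1.
    rewrite !Hc' by lra. split; rewrite Rabs_left1; lra.
Qed.


Lemma limsup_dist_le_mono u w s s' :
  s <= s' -> limsup_dist_le d u w s -> limsup_dist_le d u w s'.
Proof.
  intros Hs H e He. destruct (H e He) as [N HN]. exists N. intros n Hn.
  specialize (HN n Hn). lra.
Qed.

Lemma limsup_dist_le_eps u w s :
  (forall e, 0 < e -> limsup_dist_le d u w (s + e)) -> limsup_dist_le d u w s.
Proof.
  intros H e He. destruct (H (e / 2) ltac:(lra) (e / 2) ltac:(lra)) as [N HN].
  exists N. intros n Hn. specialize (HN n Hn). lra.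
Qed.

Lemma limsup_dist_le_of_le u w s : (forall n, d (u n) w <= s) -> limsup_dist_le d u w s.
Proof. intros H e He. exists O. intros n _. specialize (H n). lra. Qed.

Lemma limsup_dist_le_const q w s : limsup_dist_le d (fun _ => q) w s -> d q w <= s.
Proof.
  intros H. apply Rle_plus_epsilon. intros e He.
  destruct (H e He) as [N HN]. exact (HN N (le_n N)).
Qed.

Lemma limsup_dist_le_nonneg u w s : limsup_dist_le d u w s -> 0 <= s.
Proof.
  intros H. apply Rle_plus_epsilon. intros e He. destruct (H e He) as [N HN].
  specialize (HN N (le_n N)). pose proof (metric_nonneg (u N) w). lra.
Qed.

Lemma limsup_dist_le_bounded u p rho w s :
  (forall n, d (u n) p <= rho) -> limsup_dist_le d u w s -> d w p <= s + 1 + rho.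
Proof.
  intros Hup H. destruct (H 1 ltac:(lra)) as [N HN]. specialize (HN N (le_n N)).
  pose proof (metric_triangle w (u N) p). pose proof (Hup N).
  rewrite (metric_sym w (u N)) in *. lra.
Qed.

Lemma limsup_dist_le_shift u w w' s :
  (forall n, d (u (S n)) w' <= d (u n) w) ->
  limsup_dist_le d u w s -> limsup_dist_le d u w' s.
Proof.
  intros Hshift H e He. destruct (H e He) as [N HN]. exists (S N). intros n Hn.
  destruct n as [|n]; [lia|]. specialize (HN n ltac:(lia)). specialize (Hshift n). lra.
Qed.

Lemma limsup_dist_le_closed u s : seq_closed_set d (fun w => limsup_dist_le d u w s).
Proof.
  intros v w Hv Hvw e He. destruct (Hvw (e / 2) ltac:(lra)) as [J HJ].
  specialize (HJ J (le_n J)). destruct (Hv J (e / 2) ltac:(lra)) as [N HN].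
  exists N. intros n Hn. specialize (HN n Hn).
  pose proof (metric_triangle (u n) (v J) w). lra.
Qed.

Lemma limsup_dist_le_convex u s : geod_convex d (fun w => limsup_dist_le d u w s).
Proof.
  intros c l Hcg H0 Hl t Ht e He.
  destruct (H0 e He) as [N0 HN0]. destruct (Hl e He) as [Nl HNl].
  exists (Nat.max N0 Nl). intros n Hn.
  apply (geodesic_in_ball c l (u n) (s + e) t Hcg Ht); [apply HN0 | apply HNl]; lia.
Qed.

Section NestedFamily.

Variable C : nat -> X -> Prop.
Hypothesis C_nested : forall k x, C (S k) x -> C k x.

Lemma nested_le k j x : (k <= j)%nat -> C j x -> C k x.
Proof. intros Hkj. induction Hkj; auto. Qed.

(* [r] is the limit of the nondecreasing distances [inf_{C k} d p]. *)
Lemma nested_radius p rb :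
  (forall k, exists x, C k x) -> (forall x, C 0 x -> d x p <= rb) ->
  exists r, (forall k, exists x, C k x /\ d p x < r + / (INR k + 1)) /\
            (forall s, s < r -> exists k, forall x, C k x -> s < d p x).
Proof.
  intros Hne Hbd.
  set (E := fun s => exists k, forall x, C k x -> s <= d p x).
  destruct (completeness E) as [r [Hub Hlub]].
  - exists rb. intros s [k Hk]. destruct (Hne k) as [x Hx].
    specialize (Hk x Hx). specialize (Hbd x (nested_le 0 k x (Nat.le_0_l k) Hx)).
    rewrite metric_sym in Hbd. lra.
  - exists 0. exists O. intros x _. apply metric_nonneg.
  - exists r. split.
    + intros k. apply NNPP. intros Hno.
      assert (Hk : E (r + / (INR k + 1))).
      { exists k. intros x Hx. apply Rnot_lt_le. intros Hlt. apply Hno. exists x. auto. }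
      apply Hub in Hk. pose proof (inv_INR_succ_pos k). lra.
    + intros s Hs. apply NNPP. intros Hno.
      enough (r <= s) by lra.
      apply Hlub. intros s0 [k Hk]. apply Rnot_lt_le. intros Hlt. apply Hno.
      exists k. intros x Hx. specialize (Hk x Hx). lra.
Qed.

(* Two far-apart points of [C N] nearly realizing the radius would have a midpoint in
   [C N] strictly closer to [p] than the radius allows. *)
Lemma nested_radius_cauchy p r xs :
  (forall k, geod_convex d (C k)) ->
  (forall k, C k (xs k) /\ d p (xs k) < r + / (INR k + 1)) ->
  (forall s, s < r -> exists k, forall x, C k x -> s < d p x) ->
  cauchy_seq d xs.
Proof.
  intros Hcv Hxs Hfar eps Heps.
  assert (Hclose : forall N n, (N <= n)%nat -> d (xs n) p < r + / (INR N + 1)).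
  { intros N n Hn. rewrite metric_sym.
    pose proof (proj2 (Hxs n)). pose proof (inv_INR_succ_le N n Hn). lra. }
  destruct (Rle_lt_dec eps (2 * r)) as [Hle | Hlt].
  - destruct (Hslack r eps ltac:(lra) Heps Hle) as [r' [s [Hr' [Hs Huc]]]].
    destruct (Hfar s Hs) as [K HK].
    destruct (inv_INR_succ_lt (r' - r) ltac:(lra)) as [N1 HN1].
    exists (Nat.max K N1). intros j k Hj Hk.
    apply Rnot_le_lt. intros Hsep.
    set (N := Nat.max K N1) in *.
    assert (Cj : C N (xs j)) by (apply (nested_le N j); [exact Hj | apply Hxs]).
    assert (Ck : C N (xs k)) by (apply (nested_le N k); [exact Hk | apply Hxs]).
    destruct (convex_midpoint (C N) _ _ (Hcv N) Cj Ck) as [m [Cm Hmid]].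
    pose proof (inv_INR_succ_le N1 N (Nat.le_max_r K N1)).
    assert (Hmp : d m p <= s).
    { apply (Huc p (xs j) (xs k) m); auto.
      - pose proof (Hclose N j Hj). lra.
      - pose proof (Hclose N k Hk). lra. }
    specialize (HK m (nested_le K N m (Nat.le_max_l K N1) Cm)).
    rewrite metric_sym in HK. lra.
  - destruct (inv_INR_succ_lt ((eps - 2 * r) / 2) ltac:(lra)) as [N HN].
    exists N. intros j k Hj Hk.
    pose proof (metric_triangle (xs j) p (xs k)). rewrite (metric_sym p (xs k)) in *.
    pose proof (Hclose N j Hj). pose proof (Hclose N k Hk). lra.
Qed.

Lemma nested_inter :
  (forall k, exists x, C k x) -> (forall k, seq_closed_set d (C k)) ->
  (forall k, geod_convex d (C k)) -> metric_bounded d (C 0) ->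
  exists x, forall k, C k x.
Proof.
  intros Hne Hcl Hcv [p [rb Hbd]].
  destruct (nested_radius p rb Hne Hbd) as [r [Happrox Hfar]].
  destruct (choice _ Happrox) as [xs Hxs].
  destruct (Hcomplete xs (nested_radius_cauchy p r xs Hcv Hxs Hfar)) as [x Hx].
  exists x. intros k. apply (Hcl k (fun n => xs (n + k)%nat) x).
  - intros n. apply (nested_le k (n + k)); [lia | apply Hxs].
  - intros e He. destruct (Hx e He) as [N HN]. exists N. intros n Hn. apply HN. lia.
Qed.

End NestedFamily.

Lemma level_attained (P : R -> X -> Prop) m :
  (forall s s' x, s <= s' -> P s x -> P s' x) ->
  (forall x, (forall e, 0 < e -> P (m + e) x) -> P m x) ->
  (forall s, seq_closed_set d (P s)) -> (forall s, geod_convex d (P s)) ->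
  metric_bounded d (P (m + 1)) -> (forall e, 0 < e -> exists x, P (m + e) x) ->
  exists x, P m x.
Proof.
  intros Hmono Hinf Hcl Hcv [p [rb Hbd]] Happrox.
  destruct (nested_inter (fun k => P (m + / (INR k + 1)))) as [x Hx].
  - intros k x. apply Hmono. pose proof (inv_INR_succ_le k (S k) (Nat.le_succ_diag_r k)). lra.
  - intros k. apply Happrox, inv_INR_succ_pos.
  - intros k. apply Hcl.
  - intros k. apply Hcv.
  - exists p, rb. intros x Hx. apply Hbd, (Hmono (m + / (INR 0 + 1))); [|exact Hx].
    simpl. rewrite Rplus_0_l, Rinv_1. lra.
  - exists x. apply Hinf. intros e He. destruct (inv_INR_succ_lt e He) as [k Hk].
    apply (Hmono _ _ x (Rlt_le _ _ (Rplus_lt_compat_l m _ _ Hk)) (Hx k)).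
Qed.

(* A midpoint of two distinct minimizers would have a strictly smaller asymptotic radius. *)
Lemma asymptotic_center_unique K u m w1 w2 :
  geod_convex d K -> (forall w s, K w -> limsup_dist_le d u w s -> m <= s) ->
  K w1 -> K w2 -> limsup_dist_le d u w1 m -> limsup_dist_le d u w2 m -> w1 = w2.
Proof.
  intros Hcv Hmin H1 H2 L1 L2.
  destruct (Req_dec (d w1 w2) 0) as [E | E]; [apply metric_eq0, E|]. exfalso.
  pose proof (metric_nonneg w1 w2) as Hpos.
  assert (Hdiam : d w1 w2 <= 2 * m).
  { apply Rle_plus_epsilon. intros e He.
    destruct (L1 (e / 2) ltac:(lra)) as [N1 HN1]. destruct (L2 (e / 2) ltac:(lra)) as [N2 HN2].
    set (n := Nat.max N1 N2).
    specialize (HN1 n (Nat.le_max_l _ _)). specialize (HN2 n (Nat.le_max_r _ _)).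
    pose proof (metric_triangle w1 (u n) w2). rewrite (metric_sym w1 (u n)) in *. lra. }
  destruct (Hslack m (d w1 w2) ltac:(lra) ltac:(lra) Hdiam) as [r' [s [Hr' [Hs Huc]]]].
  destruct (convex_midpoint K w1 w2 Hcv H1 H2) as [mid [Hmid_K Hmid]].
  enough (Hmid_L : limsup_dist_le d u mid s) by (pose proof (Hmin mid s Hmid_K Hmid_L); lra).
  intros e He. destruct (L1 (r' - m) ltac:(lra)) as [N1 HN1].
  destruct (L2 (r' - m) ltac:(lra)) as [N2 HN2].
  exists (Nat.max N1 N2). intros n Hn. rewrite metric_sym.
  specialize (HN1 n ltac:(lia)). specialize (HN2 n ltac:(lia)).
  rewrite (metric_sym (u n)) in HN1, HN2.
  assert (d mid (u n) <= s) by (apply (Huc (u n) w1 w2 mid); [lra | lra | lra | exact Hmid]).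
  lra.
Qed.

Lemma asymptotic_center_exists K u p rho :
  (exists w, K w) -> seq_closed_set d K -> geod_convex d K -> (forall n, d (u n) p <= rho) ->
  exists m w, K w /\ limsup_dist_le d u w m /\
    forall w' s, K w' -> limsup_dist_le d u w' s -> m <= s.
Proof.
  intros [w0 Hw0] Hcl Hcv Hup.
  set (P := fun s w => K w /\ limsup_dist_le d u w s).
  destruct (is_inf_of_exists (fun s => exists w, P s w)) as [m Hm_inf].
  - exists (rho + d p w0), w0. split; [exact Hw0|]. apply limsup_dist_le_of_le.
    intros n. pose proof (metric_triangle (u n) p w0). pose proof (Hup n). lra.
  - exists 0. intros s [w [_ Hw]]. exact (limsup_dist_le_nonneg u w s Hw).
  - destruct (level_attained P m) as [w [Hw HwL]].
    + intros s s' w Hs [HK HL]. split; [exact HK | exact (limsup_dist_le_mono u w s s' Hs HL)].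
    + intros w Hw. split; [apply (Hw 1 ltac:(lra))|].
      apply limsup_dist_le_eps. intros e He. apply Hw, He.
    + intros s. apply seq_closed_and; [exact Hcl | apply limsup_dist_le_closed].
    + intros s. apply geod_convex_and; [exact Hcv | apply limsup_dist_le_convex].
    + exists p, (m + 1 + 1 + rho). intros w [_ Hw].
      exact (limsup_dist_le_bounded u p rho w _ Hup Hw).
    + intros e He. destruct (is_inf_of_approx _ m e Hm_inf He) as [s [[w Hw] Hs]].
      destruct Hw as [HK HL]. exists w. split; [exact HK|].
      apply (limsup_dist_le_mono u w s); [lra | exact HL].
    + exists m, w. split; [exact Hw|]. split; [exact HwL|].
      intros w' s Hw' HL. apply (proj1 Hm_inf). exists w'. split; assumption.
Qed.

Lemma asymptotic_center_fixed K (T : X -> X) u p rho :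
  (exists w, K w) -> seq_closed_set d K -> geod_convex d K -> (forall n, d (u n) p <= rho) ->
  (forall w, K w -> K (T w)) -> (forall w n, K w -> d (u (S n)) (T w) <= d (u n) w) ->
  exists w, K w /\ T w = w /\
    forall w' s, K w' -> limsup_dist_le d u w' s -> limsup_dist_le d u w s.
Proof.
  intros Hne Hcl Hcv Hup HT Hshift.
  destruct (asymptotic_center_exists K u p rho Hne Hcl Hcv Hup) as [m [w [Hw [HwL Hmin]]]].
  exists w. split; [exact Hw|]. split.
  - apply (asymptotic_center_unique K u m); auto.
    apply (limsup_dist_le_shift u w); [intros n; apply Hshift, Hw | exact HwL].
  - intros w' s Hw' HL. apply (limsup_dist_le_mono u w m); [apply (Hmin w'); auto | exact HwL].
Qed.

Lemma proximinal K q s :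
  seq_closed_set d K -> geod_convex d K ->
  (forall e, 0 < e -> within_dist d K q (s + e)) -> within_dist d K q s.
Proof.
  intros Hcl Hcv Happrox.
  destruct (Happrox 1 ltac:(lra)) as [k0 [Hk0 _]].
  destruct (asymptotic_center_exists K (fun _ => q) q 0) as [m [w [Hw [HwL Hmin]]]];
    [exists k0; exact Hk0 | exact Hcl | exact Hcv | intros; rewrite metric_refl; lra |].
  exists w. split; [exact Hw|]. apply limsup_dist_le_const. apply limsup_dist_le_eps.
  intros e He. destruct (Happrox e He) as [k [Hk Hqk]].
  apply (limsup_dist_le_mono _ w m); [|exact HwL].
  apply (Hmin k); [exact Hk | apply limsup_dist_le_of_le; intros; exact Hqk].
Qed.

Lemma within_dist_closed K s :
  seq_closed_set d K -> geod_convex d K -> seq_closed_set d (fun x => within_dist d K x s).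
Proof.
  intros Hcl Hcv v x Hv Hvx. apply proximinal; [exact Hcl | exact Hcv|].
  intros e He. destruct (Hvx e He) as [N HN]. specialize (HN N (le_n N)).
  destruct (Hv N) as [k [Hk Hvk]]. exists k. split; [exact Hk|].
  pose proof (metric_triangle x (v N) k). rewrite (metric_sym x (v N)) in *. lra.
Qed.

Lemma within_dist_convex K s : geod_convex d K -> geod_convex d (fun x => within_dist d K x s).
Proof.
  intros Hcv c l Hcg [k0 [Hk0 H0]] [kl [Hkl Hl]] t Ht.
  destruct (Hgeod k0 kl) as [g [Hgg [Hg0 Hgl]]].
  destruct (geodesics_stay_close c l g (d k0 kl) s t Hcg Hgg Ht) as [t' [Ht' Hgt]];
    [rewrite Hg0, metric_sym; exact H0 | rewrite Hgl, metric_sym; exact Hl |].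
  exists (g t'). split; [|rewrite metric_sym; exact Hgt].
  apply (Hcv g (d k0 kl) Hgg); [rewrite Hg0 | rewrite Hgl | ]; assumption.
Qed.

(* Sublevel sets of [dist(., A)] on [B] are closed, convex and bounded. *)
Lemma best_proximity_point A B D :
  seq_closed_set d A -> geod_convex d A -> seq_closed_set d B -> geod_convex d B ->
  metric_bounded d B -> (forall e, 0 < e -> exists a b, A a /\ B b /\ d a b < D + e) ->
  exists b, B b /\ within_dist d A b D.
Proof.
  intros HAc HAv HBc HBv [p [rb Hbd]] Happrox.
  apply (level_attained (fun s b => B b /\ within_dist d A b s)).
  - intros s s' b Hs [Hb [a [Ha Hba]]]. split; [exact Hb|]. exists a. split; [exact Ha | lra].
  - intros b Hb. split; [apply (Hb 1 ltac:(lra))|].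
    apply proximinal; [exact HAc | exact HAv|]. intros e He. apply Hb, He.
  - intros s. apply seq_closed_and; [exact HBc | apply within_dist_closed; assumption].
  - intros s. apply geod_convex_and; [exact HBv | apply within_dist_convex; assumption].
  - exists p, rb. intros b [Hb _]. apply Hbd, Hb.
  - intros e He. destruct (Happrox e He) as [a [b [Ha [Hb Hab]]]].
    exists b. split; [exact Hb|]. exists a. split; [exact Ha|]. rewrite metric_sym. lra.
Qed.

Section ProximalPair.

Variables (A B : X -> Prop) (T : X -> X) (D : R).
Hypotheses (HAc : seq_closed_set d A) (HAv : geod_convex d A).
Hypotheses (HBc : seq_closed_set d B) (HBv : geod_convex d B).
Hypotheses (HT : noncyclic A B T) (Hne : relatively_nonexpansive d A B T).

(* The asymptotic center of the orbit of [b1] in the proximal part of [A] is fixed by [T]. *)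
Lemma proximal_part_fixed_point b1 :
  metric_bounded d B -> B b1 -> within_dist d A b1 D ->
  exists w, A w /\ T w = w /\ within_dist d B w D.
Proof.
  intros [p [rho Hrho]] Hb1 [a1 [Ha1 Hab1]].
  destruct HT as [TA TB].
  assert (Horbit : forall n, B (Nat.iter n T b1)) by (induction n; simpl; auto).
  destruct (asymptotic_center_fixed (fun a => A a /\ within_dist d B a D) T
              (fun n => Nat.iter n T b1) p rho) as [w [[Hw HwB] [HTw _]]].
  - exists a1. split; [exact Ha1|]. exists b1. split; [exact Hb1 | rewrite metric_sym; exact Hab1].
  - apply seq_closed_and; [exact HAc | apply within_dist_closed; assumption].
  - apply geod_convex_and; [exact HAv | apply within_dist_convex; assumption].
  - intros n. apply Hrho, Horbit.
  - intros a [Ha [b [Hb Hab]]]. split; [auto|]. exists (T b). split; [auto|].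
    pose proof (Hne a b Ha Hb). lra.
  - intros a n [Ha _]. simpl.
    rewrite (metric_sym _ (T a)), (metric_sym _ a). apply Hne; [exact Ha | apply Horbit].
  - exists w. auto.
Qed.

(* The nearest point of [B] to a fixed point [w] of [T] is unique, hence fixed as well. *)
Lemma nearest_point_fixed w :
  A w -> T w = w -> within_dist d B w D -> exists b, B b /\ T b = b /\ d w b <= D.
Proof.
  intros Hw HTw [b [Hb Hwb]].
  destruct (asymptotic_center_fixed B T (fun _ => w) w 0) as [b' [Hb' [HTb' Hcenter]]].
  - exists b. exact Hb.
  - exact HBc.
  - exact HBv.
  - intros _. rewrite metric_refl. lra.
  - apply HT.
  - intros y _ Hy. rewrite <- HTw at 1. apply Hne; assumption.
  - exists b'. split; [exact Hb'|]. split; [exact HTb'|].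
    apply limsup_dist_le_const, (Hcenter b D Hb), limsup_dist_le_of_le. intros _. exact Hwb.
Qed.

End ProximalPair.

End BusemannUniformlyConvex.

Lemma set_dist_exists {X : Type} (d : X -> X -> R) (A B : X -> Prop) :
  is_metric d -> (exists a, A a) -> (exists b, B b) -> exists D, set_dist_is d A B D.
Proof.
  intros Hmetric [a Ha] [b Hb]. apply is_inf_of_exists.
  - exists (d a b), a, b. auto.
  - exists 0. intros s [x [y [_ [_ ->]]]]. apply (metric_nonneg Hmetric).
Qed.

Theorem mainTheorem6 (X : Type) (d : X -> X -> R) (A B : X -> Prop) (T : X -> X) :
  is_metric d -> complete_metric d -> geodesic_space d -> busemann_convex d ->
  (exists delta, modulus_uc d delta /\
     (modulus_monotone delta \/ modulus_lsc_right delta)) ->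
  (exists a, A a) -> (exists b, B b) ->
  seq_closed_set d A -> seq_closed_set d B -> geod_convex d A -> geod_convex d B ->
  metric_bounded d B ->
  noncyclic A B T -> relatively_nonexpansive d A B T ->
  exists x y, A x /\ B y /\ T x = x /\ T y = y /\ set_dist_is d A B (d x y).
Proof.
  intros Hmetric Hcomplete Hgeod Hbus [delta [Hmod Hml]] HAne HBne HAc HBc HAv HBv HBbd HT Hne.
  pose proof (modulus_uc_slack d delta Hmod Hml) as Hslack.
  destruct (set_dist_exists d A B Hmetric HAne HBne) as [D HD].
  destruct (best_proximity_point Hmetric Hcomplete Hgeod Hbus Hslack A B D HAc HAv HBc HBv HBbd)
    as [b1 [Hb1 Hb1A]].
  { intros e He. destruct (is_inf_of_approx _ D e HD He) as [s [[a [b [Ha [Hb ->]]]] Hs]].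
    exists a, b. auto. }
  destruct (proximal_part_fixed_point Hmetric Hcomplete Hgeod Hbus Hslack A B T D
              HAc HAv HBc HBv HT Hne b1 HBbd Hb1 Hb1A) as [w [Hw [HTw HwB]]].
  destruct (nearest_point_fixed Hmetric Hcomplete Hgeod Hbus Hslack A B T D
              HBc HBv HT Hne w Hw HTw HwB) as [b [Hb [HTb Hwb]]].
  exists w, b. split; [exact Hw|]. split; [exact Hb|]. split; [exact HTw|]. split; [exact HTb|].
  replace (d w b) with D; [exact HD|].
  enough (D <= d w b) by lra. apply HD. exists w, b. auto.
Qed.
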